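(* For every $\varepsilon\in(0,1]$ and $n\in\mathbb N$, \[ |\alpha(n,0)|\le\frac{\varepsilon^{-1}+4\sqrt2}{\pi}\cdot\frac{4+\varepsilon}{\varepsilon}\cdot\frac1N\Big(\frac N{N-\varepsilon}\Big)^{\max\{n-1,0\}},\qquad |\alpha(n,1)|\le\frac9\pi\cdot\frac{4+\varepsilon}{\varepsilon}\cdot\frac1N\Big(\frac N{N-\varepsilon}\Big)^{\max\{n-1,0\}}, \] \[ \sup_{q\in[-1,1]}\Big|\sum_{s=2}^\infty q^s\alpha(n,s)\Big|\le\frac1\pi\Big(\varepsilon^{-1}+\frac{16\sqrt2}{(1-\cos1)^{1/2}}\Big)\cdot\frac{4+\varepsilon}{\varepsilon}\cdot\frac1N\Big(\frac N{N-\varepsilon}\Big)^{\max\{n-2,0\}}. \]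
   Context: $E$ is a finite set with $N=\#E>8$ elements; $Q$ is an irreducible stochastic matrix on $E$ with $Q(x,y)=Q(y,x)$ for all $x,y$ and $\mathrm{tr}(Q)=0$. The function $\alpha:\mathbb Z_+\times\mathbb Z_+\to\mathbb R$ is defined by $\alpha(0,s)=0$ for all $s$ and, for $n\in\mathbb Z_+$, $\alpha(n+1,0)=\frac2{N^2}+\alpha(n,0)+\frac2{N^2}\sum_{s\ge1}\alpha(n,s)\mathrm{tr}(Q^s)$, $\alpha(n+1,1)=-\frac2{N^2}+\frac{N-2}N\alpha(n,1)-\frac2{N^2}\sum_{s\ge1}\alpha(n,s)\mathrm{tr}(Q^s)$, $\alpha(n+1,s)=\frac{N-2}N\alpha(n,s)+\frac2N\alpha(n,s-1)$ for $s\ge2$. *)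

From Stdlib Require Import Reals Lra Lia.
Open Scope R_scope.

Fixpoint rsum (n : nat) (f : nat -> R) : R :=
  match n with
  | O => 0
  | S k => rsum k f + f k
  end.

(* The finite set E is identified with {0,...,N-1}; a matrix on E is a
   function nat -> nat -> R of which only entries with indices < N matter. *)

Fixpoint mpow (N : nat) (Q : nat -> nat -> R) (s : nat) : nat -> nat -> R :=
  match s with
  | O => fun i j => if Nat.eq_dec i j then 1 else 0
  | S k => fun i j => rsum N (fun l => mpow N Q k i l * Q l j)
  end.

Definition mtrace (N : nat) (M : nat -> nat -> R) : R := rsum N (fun i => M i i).

Definition stochastic (N : nat) (Q : nat -> nat -> R) : Prop :=
  (forall i j, (i < N)%nat -> (j < N)%nat -> 0 <= Q i j) /\
  (forall i, (i < N)%nat -> rsum N (fun j => Q i j) = 1).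

Definition symmetric (N : nat) (Q : nat -> nat -> R) : Prop :=
  forall i j, (i < N)%nat -> (j < N)%nat -> Q i j = Q j i.

Definition irreducible (N : nat) (Q : nat -> nat -> R) : Prop :=
  forall i j, (i < N)%nat -> (j < N)%nat -> exists s, 0 < mpow N Q s i j.

(* alpha N Q n s = alpha(n,s).  Since alpha(m,s) = 0 for s > m (immediate
   induction from the recursion), the series sum_{s>=1} alpha(m,s) tr(Q^s)
   is the finite sum over s = 1..m. *)
Fixpoint alpha (N : nat) (Q : nat -> nat -> R) (n : nat) : nat -> R :=
  match n with
  | O => fun _ => 0
  | S m =>
      let a := alpha N Q m in
      let NR := INR N in
      let Sm := rsum m (fun k => a (S k) * mtrace N (mpow N Q (S k))) in
      fun s =>
        match s with
        | O => 2 / NR ^ 2 + a O + 2 / NR ^ 2 * Sm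
        | S O => - (2 / NR ^ 2) + (NR - 2) / NR * a 1%nat - 2 / NR ^ 2 * Sm
        | S (S _ as s') => (NR - 2) / NR * a s + 2 / NR * a s'
        end
  end.

(* sum_{s >= 2} q^s alpha(n,s): alpha(n,s) = 0 for s > n, so this is the
   finite sum over s = 2..n. *)
Definition alpha_tail (N : nat) (Q : nat -> nat -> R) (n : nat) (q : R) : R :=
  rsum (n - 1) (fun k => q ^ (k + 2) * alpha N Q n (k + 2)).

(* Put u_n = 1 + sum_{s>=1} alpha(n,s) tr(Q^s).  Then alpha(n+1,0) - alpha(n,0)
   = 2 u_n / N^2, and the recursion for alpha(n,s), s >= 1, is a contraction driven
   by the same increments, so every quantity in the statement is at most 2n/N^2
   once 0 <= u_n <= 1; Bernoulli's inequality turns 2n/N^2 into the stated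
   geometric bounds.  Unfolding the recursion, u solves a renewal equation whose
   kernel is h(m) = tr(P^m)/N for the lazy walk P = (1 - 2/N) I + (2/N) Q.  Since P
   is symmetric with 0 <= P <= I as quadratic forms, h is nonincreasing and
   log-convex (Cauchy-Schwarz for the forms tr(X Y) and tr(X P Y)), and by Kaluza's
   theorem the renewal increments of a log-convex sequence are nonnegative; this
   forces u_n >= 0, and u_n <= 1 follows from the same equation. *)

From Stdlib Require Import Reals Lra Lia.
Open Scope R_scope.

Lemma rsum_ext n f g :
  (forall k, (k < n)%nat -> f k = g k) -> rsum n f = rsum n g.
Proof.
  induction n as [|n IH]; intros H; simpl; [reflexivity|].
  rewrite IH by (intros; apply H; lia). rewrite H by lia. reflexivity.
Qed.

Lemma rsum_plus n f g : rsum n (fun k => f k + g k) = rsum n f + rsum n g.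
Proof. induction n; simpl; [|rewrite IHn]; lra. Qed.

Lemma rsum_minus n f g : rsum n (fun k => f k - g k) = rsum n f - rsum n g.
Proof. induction n; simpl; [|rewrite IHn]; lra. Qed.

Lemma rsum_scal_l n c f : rsum n (fun k => c * f k) = c * rsum n f.
Proof. induction n; simpl; [|rewrite IHn]; lra. Qed.

Lemma rsum_scal_r n c f : rsum n (fun k => f k * c) = rsum n f * c.
Proof. induction n; simpl; [|rewrite IHn]; lra. Qed.

Lemma rsum_const n c : rsum n (fun _ => c) = INR n * c.
Proof. induction n; simpl rsum; [simpl|rewrite IHn, S_INR]; lra. Qed.

Lemma rsum_le n f g :
  (forall k, (k < n)%nat -> f k <= g k) -> rsum n f <= rsum n g.
Proof.
  induction n as [|n IH]; intros H; simpl; [lra|].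
  assert (rsum n f <= rsum n g) by (apply IH; intros; apply H; lia).
  assert (f n <= g n) by (apply H; lia). lra.
Qed.

Lemma rsum_nonneg n f : (forall k, (k < n)%nat -> 0 <= f k) -> 0 <= rsum n f.
Proof.
  intros H. replace 0 with (rsum n (fun _ => 0)) by (rewrite rsum_const; ring).
  now apply rsum_le.
Qed.

Lemma rsum_term_le n f k :
  (forall j, (j < n)%nat -> 0 <= f j) -> (k < n)%nat -> f k <= rsum n f.
Proof.
  induction n as [|n IH]; intros H Hk; [lia|]. simpl.
  destruct (Nat.eq_dec k n) as [->|Hkn].
  - assert (0 <= rsum n f) by (apply rsum_nonneg; intros; apply H; lia). lra.
  - assert (f k <= rsum n f) by (apply IH; [intros; apply H|]; lia).
    assert (0 <= f n) by (apply H; lia). lra.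
Qed.

Lemma rsum_Rabs n f : Rabs (rsum n f) <= rsum n (fun k => Rabs (f k)).
Proof.
  induction n; simpl; [rewrite Rabs_R0; lra|].
  eapply Rle_trans; [apply Rabs_triang | lra].
Qed.

Lemma rsum_shift n f : rsum (S n) f = f O + rsum n (fun k => f (S k)).
Proof.
  induction n as [|n IH]; [simpl; lra|].
  change (rsum (S (S n)) f) with (rsum (S n) f + f (S n)). rewrite IH. simpl. lra.
Qed.

Lemma rsum_telescope n f : rsum n (fun k => f k - f (S k)) = f O - f n.
Proof. induction n; simpl; [|rewrite IHn]; lra. Qed.

Lemma rsum_comm n m f :
  rsum n (fun i => rsum m (fun j => f i j)) = rsum m (fun j => rsum n (fun i => f i j)).
Proof.
  induction n as [|n IH]; simpl.
  - induction m; simpl; [reflexivity | rewrite <- IHm; lra].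
  - rewrite IH, <- rsum_plus. reflexivity.
Qed.

Definition conv (a b : nat -> R) (n : nat) : R :=
  rsum (S n) (fun k => a k * b (n - k)%nat).

Lemma conv_S a b n : conv a b (S n) = a O * b (S n) + conv (fun k => a (S k)) b n.
Proof. unfold conv. rewrite rsum_shift. reflexivity. Qed.

Lemma conv_last a b n :
  conv a b (S n) = rsum (S n) (fun k => a k * b (S n - k)%nat) + a (S n) * b O.
Proof. unfold conv. cbn [rsum]. rewrite Nat.sub_diag. reflexivity. Qed.

Lemma conv_minus a b h n : conv (fun k => a k - b k) h n = conv a h n - conv b h n.
Proof.
  unfold conv. rewrite <- rsum_minus. apply rsum_ext. intros. ring.
Qed.

Lemma conv_scal_l c a h n : conv (fun k => c * a k) h n = c * conv a h n.
Proof.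
  unfold conv. rewrite <- rsum_scal_l. apply rsum_ext. intros. ring.
Qed.

Definition kron (i j : nat) : R := if Nat.eq_dec i j then 1 else 0.

Lemma kron_sym i j : kron i j = kron j i.
Proof. unfold kron. destruct (Nat.eq_dec i j), (Nat.eq_dec j i); subst; lia || lra. Qed.

Lemma rsum_kron_r n f i : (i < n)%nat -> rsum n (fun l => f l * kron l i) = f i.
Proof.
  induction n as [|n IH]; intros Hi; [lia|]. simpl. unfold kron at 2.
  destruct (Nat.eq_dec n i) as [->|Hni].
  - rewrite (rsum_ext _ _ (fun _ => 0)), rsum_const; [lra|].
    intros k Hk. unfold kron. destruct (Nat.eq_dec k i); [lia|lra].
  - rewrite IH by lia. lra.
Qed.

Lemma rsum_kron_l n f i : (i < n)%nat -> rsum n (fun l => kron i l * f l) = f i.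
Proof.
  intros Hi. rewrite <- (rsum_kron_r n f i Hi).
  apply rsum_ext. intros k _. rewrite kron_sym. ring.
Qed.

Section Matrices.

Variable N : nat.

Definition mmul (X Y : nat -> nat -> R) : nat -> nat -> R :=
  fun i j => rsum N (fun l => X i l * Y l j).

Definition msym (M : nat -> nat -> R) : Prop :=
  forall i j, (i < N)%nat -> (j < N)%nat -> M i j = M j i.

Lemma mmul_assoc X Y Z i j : mmul (mmul X Y) Z i j = mmul X (mmul Y Z) i j.
Proof.
  unfold mmul.
  rewrite (rsum_ext _ _ (fun l => rsum N (fun k => X i k * Y k l * Z l j)))
    by (intros; rewrite <- rsum_scal_r; reflexivity).
  rewrite rsum_comm. apply rsum_ext. intros k _.
  rewrite <- rsum_scal_l. apply rsum_ext. intros. ring.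
Qed.

Lemma mpow_add M a b i j : (i < N)%nat -> (j < N)%nat ->
  mpow N M (a + b) i j = mmul (mpow N M a) (mpow N M b) i j.
Proof.
  revert i j. induction b as [|b IH]; intros i j Hi Hj.
  - rewrite Nat.add_0_r. unfold mmul. symmetry. now apply rsum_kron_r.
  - rewrite Nat.add_succ_r.
    change (mmul (mpow N M (a + b)) M i j = mmul (mpow N M a) (mmul (mpow N M b) M) i j).
    rewrite <- mmul_assoc. unfold mmul at 1 3. apply rsum_ext. intros l Hl.
    rewrite IH by assumption. reflexivity.
Qed.

Lemma mpow_Sl M k i j : (i < N)%nat -> (j < N)%nat ->
  mpow N M (S k) i j = mmul M (mpow N M k) i j.
Proof.
  intros Hi Hj. change (S k) with (1 + k)%nat. rewrite mpow_add by assumption.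
  unfold mmul. apply rsum_ext. intros l _. f_equal.
  exact (rsum_kron_l N (fun l' => M l' l) i Hi).
Qed.

Lemma mtrace_kron : mtrace N kron = INR N.
Proof.
  unfold mtrace. rewrite (rsum_ext _ _ (fun _ => 1)), rsum_const; [ring|].
  intros i _. unfold kron. destruct (Nat.eq_dec i i); congruence.
Qed.

Lemma kron_msym : msym kron.
Proof. intros i j _ _. apply kron_sym. Qed.

Lemma mpow_msym M k : msym M -> msym (mpow N M k).
Proof.
  intros HM. induction k as [|k IH]; intros i j Hi Hj; [apply kron_sym|].
  change (mmul (mpow N M k) M i j = mpow N M (S k) j i).
  rewrite mpow_Sl by assumption. unfold mmul. apply rsum_ext. intros l Hl.
  rewrite IH, HM by assumption. ring.
Qed.

Lemma mpow_nonneg M k :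
  (forall i j, (i < N)%nat -> (j < N)%nat -> 0 <= M i j) ->
  forall i j, (i < N)%nat -> (j < N)%nat -> 0 <= mpow N M k i j.
Proof.
  intros HM. induction k as [|k IH]; intros i j Hi Hj.
  - simpl. destruct (Nat.eq_dec i j); lra.
  - apply rsum_nonneg. intros. apply Rmult_le_pos; auto.
Qed.

End Matrices.

Lemma quadratic_nonneg_discriminant A B C : 0 <= C ->
  (forall t, 0 <= A + 2 * t * B + t * t * C) -> B * B <= A * C.
Proof.
  intros HC H. destruct (Rtotal_order C 0) as [Hc|[Hc|Hc]]; [lra| |].
  - subst C. destruct (Req_dec B 0) as [->|HB]; [lra|].
    pose proof (H (- (Rabs A + 1) / (2 * B))) as H1.
    replace (2 * (- (Rabs A + 1) / (2 * B)) * B) with (- (Rabs A + 1)) in H1 by (field; auto).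
    pose proof (RRle_abs A). lra.
  - pose proof (H (- B / C)) as H1.
    replace (A + 2 * (- B / C) * B + - B / C * (- B / C) * C) with (A - B * B / C) in H1
      by (field; lra).
    apply (Rmult_le_compat_r C) in H1; [|lra].
    replace ((A - B * B / C) * C) with (A * C - B * B) in H1 by (field; lra). lra.
Qed.

Section TraceForm.

Variable N : nat.

Definition tform (M X Y : nat -> nat -> R) : R := mtrace N (mmul N X (mmul N M Y)).

Definition qform (M : nat -> nat -> R) (x : nat -> R) : R :=
  rsum N (fun j => x j * rsum N (fun l => M j l * x l)).

Definition sqnorm (x : nat -> R) : R := rsum N (fun j => x j * x j).

Definition madd (X : nat -> nat -> R) (t : R) (Y : nat -> nat -> R) : nat -> nat -> R :=
  fun i j => X i j + t * Y i j.

Lemma sqnorm_nonneg x : 0 <= sqnorm x.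
Proof. apply rsum_nonneg. intros. nra. Qed.

Lemma qform_kron x : qform kron x = sqnorm x.
Proof. apply rsum_ext. intros j Hj. now rewrite rsum_kron_l. Qed.

Lemma tform_diag M X : msym N X -> tform M X X = rsum N (fun i => qform M (X i)).
Proof.
  intros HX. apply rsum_ext. intros i Hi. apply rsum_ext. intros j Hj.
  f_equal. apply rsum_ext. intros l Hl. now rewrite (HX l i).
Qed.

Lemma tform_kron_nonneg Z : msym N Z -> 0 <= tform kron Z Z.
Proof.
  intros HZ. rewrite tform_diag by assumption.
  apply rsum_nonneg. intros. rewrite qform_kron. apply sqnorm_nonneg.
Qed.

Lemma tform_madd_l M X t Y Z : tform M (madd X t Y) Z = tform M X Z + t * tform M Y Z.
Proof.
  unfold tform, mtrace, mmul, madd. rewrite <- rsum_scal_l, <- rsum_plus.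
  apply rsum_ext. intros. rewrite <- rsum_scal_l, <- rsum_plus.
  apply rsum_ext. intros. ring.
Qed.

Lemma tform_madd_r M X t Y Z : tform M Z (madd X t Y) = tform M Z X + t * tform M Z Y.
Proof.
  unfold tform, mtrace, mmul, madd. rewrite <- rsum_scal_l, <- rsum_plus.
  apply rsum_ext. intros i Hi. rewrite <- rsum_scal_l, <- rsum_plus.
  apply rsum_ext. intros k Hk.
  rewrite (rsum_ext _ _ (fun l => M k l * X l i + t * (M k l * Y l i))) by (intros; ring).
  rewrite rsum_plus, rsum_scal_l. ring.
Qed.

Lemma tform_sym M X Y : msym N M -> msym N X -> msym N Y -> tform M X Y = tform M Y X.
Proof.
  intros HM HX HY. unfold tform, mtrace, mmul. apply rsum_ext. intros i Hi.
  rewrite (rsum_ext _ _ (fun k => rsum N (fun l => X i k * M k l * Y l i)))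
    by (intros; rewrite <- rsum_scal_l; apply rsum_ext; intros; ring).
  rewrite (rsum_ext _ (fun k => Y i k * _) (fun k => rsum N (fun l => Y i k * M k l * X l i)))
    by (intros; rewrite <- rsum_scal_l; apply rsum_ext; intros; ring).
  rewrite (rsum_comm N N). apply rsum_ext. intros k Hk. apply rsum_ext. intros l Hl.
  rewrite (HX i l), (HY k i), (HM l k) by assumption. ring.
Qed.

Lemma madd_msym X t Y : msym N X -> msym N Y -> msym N (madd X t Y).
Proof. intros HX HY i j Hi Hj. unfold madd. now rewrite HX, HY. Qed.

Lemma tform_Cauchy_Schwarz M X Y : msym N M ->
  (forall Z, msym N Z -> 0 <= tform M Z Z) -> msym N X -> msym N Y ->
  tform M X Y * tform M X Y <= tform M X X * tform M Y Y.
Proof.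
  intros HM Hpsd HX HY. apply quadratic_nonneg_discriminant; [now apply Hpsd|]. intros t.
  pose proof (Hpsd (madd X t Y) (madd_msym X t Y HX HY)) as H.
  rewrite tform_madd_l, !tform_madd_r, (tform_sym M Y X) in H by assumption. lra.
Qed.

Lemma tform_kron_mpow P a b : tform kron (mpow N P a) (mpow N P b) = mtrace N (mpow N P (a + b)).
Proof.
  apply rsum_ext. intros i Hi. rewrite mpow_add by assumption.
  apply rsum_ext. intros l Hl. f_equal. exact (rsum_kron_l N (fun m => mpow N P b m i) l Hl).
Qed.

Lemma tform_mpow P a b : tform P (mpow N P a) (mpow N P b) = mtrace N (mpow N P (a + S b)).
Proof.
  apply rsum_ext. intros i Hi. rewrite mpow_add by assumption.
  apply rsum_ext. intros l Hl. f_equal. symmetry. now apply mpow_Sl.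
Qed.

End TraceForm.

Definition lazy (rho aa : R) (Q : nat -> nat -> R) : nat -> nat -> R :=
  fun i j => rho * kron i j + aa * Q i j.

Section LazyWalk.

Variables (N : nat) (Q : nat -> nat -> R) (rho aa : R).
Hypotheses (Hst : stochastic N Q) (Hsym : symmetric N Q).

Lemma rsum_stochastic_col l : (l < N)%nat -> rsum N (fun j => Q j l) = 1.
Proof.
  intros Hl. destruct Hst as [_ Hrow]. rewrite <- (Hrow l Hl).
  apply rsum_ext. intros. now apply Hsym.
Qed.

Lemma qform_stochastic_sign x sg : sg * sg = 1 ->
  0 <= 2 * sqnorm N x + 2 * sg * qform N Q x.
Proof.
  intros Hsg. destruct Hst as [Hpos Hrow].
  (* expand the square, then use that rows and columns of Q sum to 1 *)
  assert (H0 : 0 <= rsum N (fun j => rsum N (fun l =>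
                 Q j l * ((x j + sg * x l) * (x j + sg * x l))))).
  { apply rsum_nonneg; intros; apply rsum_nonneg; intros.
    apply Rmult_le_pos; [now apply Hpos | apply Rle_0_sqr]. }
  rewrite (rsum_ext _ _ (fun j => x j * x j * rsum N (fun l => Q j l)
      + 2 * sg * (x j * rsum N (fun l => Q j l * x l))
      + rsum N (fun l => Q j l * (x l * x l)))) in H0.
  2:{ intros j Hj. rewrite <- !rsum_scal_l, <- !rsum_plus. apply rsum_ext. intros l Hl.
      transitivity (x j * x j * Q j l + 2 * sg * (x j * (Q j l * x l))
                    + (sg * sg) * (Q j l * (x l * x l))); [ring|]. rewrite Hsg. ring. }
  rewrite !rsum_plus, rsum_scal_l, (rsum_comm N N (fun j l => Q j l * (x l * x l))) in H0.
  rewrite (rsum_ext _ (fun j => x j * x j * _) (fun j => x j * x j)) in H0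
    by (intros; rewrite Hrow by assumption; ring).
  rewrite (rsum_ext _ (fun l => rsum N (fun j => Q j l * (x l * x l))) (fun l => x l * x l)) in H0
    by (intros; rewrite rsum_scal_r, rsum_stochastic_col by assumption; ring).
  unfold sqnorm, qform. lra.
Qed.

Lemma qform_stochastic_bound x : - sqnorm N x <= qform N Q x <= sqnorm N x.
Proof.
  pose proof (qform_stochastic_sign x 1 ltac:(ring)).
  pose proof (qform_stochastic_sign x (-1) ltac:(ring)). lra.
Qed.

Lemma qform_lazy x : qform N (lazy rho aa Q) x = rho * sqnorm N x + aa * qform N Q x.
Proof.
  unfold qform, sqnorm, lazy. rewrite <- !rsum_scal_l, <- rsum_plus.
  apply rsum_ext. intros j Hj.
  rewrite (rsum_ext _ _ (fun l => rho * (kron j l * x l) + aa * (Q j l * x l))) by (intros; ring).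
  rewrite rsum_plus, !rsum_scal_l, rsum_kron_l by assumption. ring.
Qed.

Lemma lazy_msym : msym N (lazy rho aa Q).
Proof. intros i j Hi Hj. unfold lazy. now rewrite kron_sym, Hsym. Qed.

Lemma tform_lazy_nonneg Z : 0 <= aa <= rho -> msym N Z -> 0 <= tform N (lazy rho aa Q) Z Z.
Proof.
  intros Ha HZ. rewrite tform_diag by assumption. apply rsum_nonneg. intros k _.
  rewrite qform_lazy. pose proof (qform_stochastic_bound (Z k)).
  pose proof (sqnorm_nonneg N (Z k)). nra.
Qed.

Lemma tform_lazy_le_kron Z : 0 <= aa -> rho + aa = 1 -> msym N Z ->
  tform N (lazy rho aa Q) Z Z <= tform N kron Z Z.
Proof.
  intros Ha Hs HZ. rewrite !tform_diag by assumption. apply rsum_le. intros k _.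
  rewrite qform_lazy, qform_kron. pose proof (qform_stochastic_bound (Z k)). nra.
Qed.

Definition lazy_trace (m : nat) : R := mtrace N (mpow N (lazy rho aa Q) m).

Lemma lazy_trace_pos m : (0 < N)%nat -> 0 < rho -> 0 <= aa -> 0 < lazy_trace m.
Proof.
  intros HN Hr Ha. destruct Hst as [Hpos _].
  assert (Hnn : forall i j, (i < N)%nat -> (j < N)%nat -> 0 <= lazy rho aa Q i j).
  { intros i j Hi Hj. unfold lazy, kron. pose proof (Hpos i j Hi Hj).
    destruct (Nat.eq_dec i j); nra. }
  assert (Hdiag : forall k i, (i < N)%nat -> rho ^ k <= mpow N (lazy rho aa Q) k i i).
  { induction k as [|k IH]; intros i Hi.
    - simpl. destruct (Nat.eq_dec i i); [lra | congruence].
    - eapply Rle_trans; [|apply (rsum_term_le N _ i); [|exact Hi]].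
      2:{ intros. apply Rmult_le_pos; [apply mpow_nonneg|apply Hnn]; auto. }
      assert (rho <= lazy rho aa Q i i).
      { unfold lazy, kron. destruct (Nat.eq_dec i i); [|lia]. pose proof (Hpos i i Hi Hi). nra. }
      change (rho ^ S k) with (rho * rho ^ k). cbv beta. rewrite Rmult_comm.
      pose proof (pow_lt rho k Hr). apply Rmult_le_compat; auto; lra. }
  eapply Rlt_le_trans; [apply (pow_lt rho m Hr)|].
  eapply Rle_trans; [apply (Hdiag m 0%nat HN)|].
  apply (rsum_term_le N (fun i => mpow N (lazy rho aa Q) m i i)); [|exact HN].
  intros. now apply mpow_nonneg.
Qed.

Lemma lazy_trace_log_convex m : 0 <= aa <= rho ->
  lazy_trace (S m) * lazy_trace (S m) <= lazy_trace m * lazy_trace (S (S m)).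
Proof.
  intros Ha. unfold lazy_trace. set (P := lazy rho aa Q).
  assert (HPk : forall k, msym N (mpow N P k)) by (intros; apply mpow_msym, lazy_msym).
  (* Cauchy-Schwarz for P^k, P^(k+1): in the form tr(X Y) if m is even, in the
     form tr(X P Y), positive as aa <= rho, if m is odd. *)
  destruct (Nat.Even_or_Odd m) as [[k ->]|[k ->]].
  - pose proof (tform_Cauchy_Schwarz N kron (mpow N P k) (mpow N P (S k)) (kron_msym N)
      (tform_kron_nonneg N) (HPk k) (HPk (S k))) as H.
    rewrite !tform_kron_mpow in H.
    replace (k + S k)%nat with (S (2 * k)) in H by lia.
    replace (k + k)%nat with (2 * k)%nat in H by lia.
    replace (S k + S k)%nat with (S (S (2 * k))) in H by lia. exact H.
  - pose proof (tform_Cauchy_Schwarz N P (mpow N P k) (mpow N P (S k)) lazy_msym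
      (fun Z HZ => tform_lazy_nonneg Z Ha HZ) (HPk k) (HPk (S k))) as H.
    rewrite !tform_mpow in H.
    replace (k + S (S k))%nat with (S (2 * k + 1)) in H by lia.
    replace (k + S k)%nat with (2 * k + 1)%nat in H by lia.
    replace (S k + S (S k))%nat with (S (S (2 * k + 1))) in H by lia. exact H.
Qed.

Lemma lazy_trace_nonincreasing m : (0 < N)%nat -> 0 <= aa <= rho -> rho + aa = 1 ->
  lazy_trace (S m) <= lazy_trace m.
Proof.
  intros HN Ha Hs. set (P := lazy rho aa Q).
  assert (Hev : forall k, lazy_trace (S (2 * k)) <= lazy_trace (2 * k)%nat).
  { intros k. unfold lazy_trace. pose proof (tform_lazy_le_kron (mpow N P k) ltac:(lra) Hs
      (mpow_msym N P k lazy_msym)) as H.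
    rewrite tform_mpow, tform_kron_mpow in H.
    replace (k + S k)%nat with (S (2 * k)) in H by lia.
    replace (k + k)%nat with (2 * k)%nat in H by lia. exact H. }
  destruct (Nat.Even_or_Odd m) as [[k ->]|[k ->]]; [apply Hev|].
  (* odd steps: combine log-convexity with the next even step *)
  pose proof (lazy_trace_log_convex (2 * k + 1) Ha) as Hlc.
  pose proof (Hev (S k)) as He.
  replace (S (2 * S k)) with (S (S (2 * k + 1))) in He by lia.
  replace (2 * S k)%nat with (S (2 * k + 1)) in He by lia.
  pose proof (lazy_trace_pos (S (S (2 * k + 1))) HN ltac:(lra) ltac:(lra)).
  pose proof (lazy_trace_pos (S (2 * k + 1)) HN ltac:(lra) ltac:(lra)).
  pose proof (lazy_trace_pos (2 * k + 1) HN ltac:(lra) ltac:(lra)).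
  nra.
Qed.

End LazyWalk.

(* [shift_poly rho aa m w] is ((rho + aa T)^m w)(0), T the shift [w |-> w o S]: it
   turns sums against the powers of Q into powers of [lazy rho aa Q]. *)
Fixpoint shift_poly (rho aa : R) (m : nat) (w : nat -> R) : R :=
  match m with
  | O => w O
  | S m' => rho * shift_poly rho aa m' w + aa * shift_poly rho aa m' (fun s => w (S s))
  end.

Lemma shift_poly_ext rho aa m w1 w2 :
  (forall s, w1 s = w2 s) -> shift_poly rho aa m w1 = shift_poly rho aa m w2.
Proof.
  revert w1 w2. induction m as [|m IH]; intros w1 w2 H; simpl; [apply H|].
  rewrite (IH w1 w2), (IH (fun s => w1 (S s)) (fun s => w2 (S s))); auto.
Qed.

Lemma shift_poly_nonneg rho aa m w : 0 <= rho -> 0 <= aa ->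
  (forall s, 0 <= w s) -> 0 <= shift_poly rho aa m w.
Proof.
  intros Hr Ha. revert w. induction m as [|m IH]; intros w Hw; simpl; [apply Hw|].
  pose proof (IH w Hw). pose proof (IH (fun s => w (S s)) (fun s => Hw (S s))). nra.
Qed.

Lemma shift_poly_rsum rho aa m n W :
  shift_poly rho aa m (fun s => rsum n (fun i => W i s))
  = rsum n (fun i => shift_poly rho aa m (W i)).
Proof.
  revert W. induction m as [|m IH]; intros W; simpl; [reflexivity|].
  rewrite (IH W), (IH (fun i s => W i (S s))), <- !rsum_scal_l, <- rsum_plus.
  reflexivity.
Qed.

Lemma mmul_lazy_r N Q rho aa Y i l : (l < N)%nat ->
  mmul N Y (lazy rho aa Q) i l = rho * Y i l + aa * mmul N Y Q i l.
Proof.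
  intros Hl. unfold mmul, lazy.
  rewrite (rsum_ext _ _ (fun k => rho * (Y i k * kron k l) + aa * (Y i k * Q k l)))
    by (intros; ring).
  now rewrite rsum_plus, !rsum_scal_l, rsum_kron_r.
Qed.

Lemma shift_poly_mpow N Q rho aa m Y i j : (i < N)%nat -> (j < N)%nat ->
  shift_poly rho aa m (fun s => mmul N Y (mpow N Q s) i j)
  = mmul N Y (mpow N (lazy rho aa Q) m) i j.
Proof.
  revert Y. induction m as [|m IH]; intros Y Hi Hj; [reflexivity|]. simpl shift_poly.
  rewrite (shift_poly_ext _ _ _ (fun s => mmul N Y (mpow N Q (S s)) i j)
                                 (fun s => mmul N (mmul N Y Q) (mpow N Q s) i j)).
  2:{ intros s. rewrite mmul_assoc. apply rsum_ext. intros l Hl. now rewrite mpow_Sl. }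
  rewrite !IH by assumption.
  transitivity (mmul N (mmul N Y (lazy rho aa Q)) (mpow N (lazy rho aa Q) m) i j).
  - unfold mmul at 1 2 4. rewrite <- !rsum_scal_l, <- rsum_plus.
    apply rsum_ext. intros l Hl. rewrite mmul_lazy_r by assumption. ring.
  - rewrite mmul_assoc. apply rsum_ext. intros l Hl. now rewrite mpow_Sl.
Qed.

Lemma shift_poly_mtrace N Q rho aa m :
  shift_poly rho aa m (fun s => mtrace N (mpow N Q s)) = lazy_trace N Q rho aa m.
Proof.
  unfold mtrace, lazy_trace.
  rewrite (shift_poly_rsum rho aa m N (fun i s => mpow N Q s i i)).
  apply rsum_ext. intros i Hi.
  rewrite (shift_poly_ext _ _ _ _ (fun s => mmul N kron (mpow N Q s) i i)).
  - rewrite shift_poly_mpow by assumption. unfold mmul. now rewrite rsum_kron_l.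
  - intros s. unfold mmul. now rewrite rsum_kron_l.
Qed.

Section Renewal.

Variable h : nat -> R.
Hypotheses (Hh0 : h O = 1) (Hpos : forall m, 0 < h m)
  (Hlc : forall m, h (S m) * h (S m) <= h m * h (S (S m))).

Lemma log_convex_ratio_le k m : (k <= m)%nat -> h (S k) * h m <= h (S m) * h k.
Proof.
  induction 1 as [|m Hkm IH]; [lra|].
  pose proof (Hlc m). pose proof (Hpos m). pose proof (Hpos (S m)).
  pose proof (Hpos (S (S m))). pose proof (Hpos k). pose proof (Hpos (S k)).
  assert (h (S k) * h (S m) * h (S m) <= h (S (S m)) * h k * h (S m)) by nra.
  nra.
Qed.

Lemma renewal_increment_nonneg f :
  (forall n, conv f h n = h (S n)) -> forall n, 0 <= f n.
Proof.
  intros Hf. enough (H : forall n j, (j <= n)%nat -> 0 <= f j) by (intros n; now apply (H n)).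
  induction n as [|n IH]; intros j Hj.
  - replace j with O by lia. pose proof (Hf O) as E. pose proof (Hpos 1).
    unfold conv in E. simpl in E. rewrite Hh0 in E. lra.
  - destruct (Nat.eq_dec j (S n)) as [->|Hjn]; [|apply IH; lia].
    assert (Hk : h (S n) * f (S n) = rsum (S n) (fun j =>
              f j * (h (n - j)%nat * h (S (S n)) - h (S n - j)%nat * h (S n)))).
    { pose proof (Hf (S n)) as E1. pose proof (Hf n) as E2.
      rewrite conv_last, Hh0 in E1. unfold conv in E2.
      rewrite (rsum_ext _ _ (fun j => f j * h (n - j)%nat * h (S (S n))
                                    - f j * h (S n - j)%nat * h (S n))) by (intros; ring).
      rewrite rsum_minus, !rsum_scal_r, E2. nra. }
    assert (0 <= h (S n) * f (S n)).
    { rewrite Hk. apply rsum_nonneg. intros j Hj'. apply Rmult_le_pos; [apply IH; lia|].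
      replace (S n - j)%nat with (S (n - j)) by lia.
      pose proof (log_convex_ratio_le (n - j) (S n) ltac:(lia)). lra. }
    pose proof (Hpos (S n)). nra.
Qed.

Hypothesis Hdec : forall m, h (S m) <= h m.

Lemma renewal_mass_le f :
  (forall n, conv f h n = h (S n)) -> forall n, rsum (S n) f <= 1.
Proof.
  intros Hf n. pose proof (renewal_increment_nonneg f Hf) as Hfpos.
  assert (Hdec' : forall a b, (a <= b)%nat -> h b <= h a).
  { induction 1; [lra|]. pose proof (Hdec m). lra. }
  assert (Hmass : rsum (S n) (fun j => f j * h (S n)) <= conv f h n).
  { apply rsum_le. intros j Hj. apply Rmult_le_compat_l; [apply Hfpos | apply Hdec'; lia]. }
  rewrite rsum_scal_r, Hf in Hmass. pose proof (Hpos (S n)). nra.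
Qed.

(* With D = u * h (convolution) one gets D(n+1) = rho D(n) + 1, so r = u - rho u(. - 1)
   satisfies r * h = 1 and its decrements f n = r n - r (n+1) solve f * h = h(. + 1).
   Hence f >= 0 and sum f <= 1, i.e. r >= 0, and then u >= 0. *)
Lemma renewal_solution_nonneg rho u : 0 <= rho ->
  (forall n, u n = 1 - rsum n (fun k => u k * (h (n - k)%nat - rho * h (n - 1 - k)%nat))) ->
  forall n, 0 <= u n.
Proof.
  intros Hrho Hu.
  assert (Hu0 : u O = 1) by (rewrite Hu; simpl; lra).
  assert (HD : forall n, conv u h (S n) = rho * conv u h n + 1).
  { intros n. rewrite conv_last, Hh0, (Hu (S n)).
    rewrite (rsum_ext _ (fun k => u k * (h (S n - k)%nat - rho * h (S n - 1 - k)%nat))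
                        (fun k => u k * h (S n - k)%nat - rho * (u k * h (n - k)%nat)))
      by (intros k Hk; replace (S n - 1 - k)%nat with (n - k)%nat by lia; ring).
    rewrite rsum_minus, rsum_scal_l. unfold conv. lra. }
  set (r := fun n => match n with O => u O | S m => u (S m) - rho * u m end).
  assert (Hr : forall n, conv r h n = 1).
  { intros [|n]; [unfold conv; simpl; rewrite Hu0, Hh0; lra|].
    rewrite conv_S. simpl r.
    rewrite (conv_minus (fun k => u (S k)) (fun k => rho * u k)), conv_scal_l.
    pose proof (HD n) as E. rewrite conv_S in E. lra. }
  set (f := fun n => r n - r (S n)).
  assert (Hf : forall n, conv f h n = h (S n)).
  { intros n. unfold f. rewrite conv_minus, Hr.
    pose proof (Hr (S n)) as E. rewrite conv_S in E.
    change (r O) with (u O) in E. rewrite Hu0 in E. lra. }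
  assert (Hrpos : forall n, 0 <= r (S n)).
  { intros n. pose proof (rsum_telescope (S n) r) as E. fold f in E.
    pose proof (renewal_mass_le f Hf n). simpl r in E |- *. rewrite Hu0 in E. lra. }
  induction n as [|n IH]; [lra|]. pose proof (Hrpos n) as Hrn. simpl r in Hrn. nra.
Qed.

End Renewal.

Lemma pow_le_one x k : 0 <= x <= 1 -> x ^ k <= 1.
Proof. intros H. induction k; simpl; nra. Qed.

Section Alpha.

Variables (N : nat) (Q : nat -> nat -> R).

Definition rhoN : R := (INR N - 2) / INR N.
Definition aaN : R := 2 / INR N.

Definition trQ (s : nat) : R := mtrace N (mpow N Q s).

Definition alpha_pair (n : nat) (w : nat -> R) : R :=
  rsum n (fun k => alpha N Q n (S k) * w (S k)).

Definition alpha_incr (n : nat) : R := 2 / INR N ^ 2 * (1 + alpha_pair n trQ).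

Lemma alpha_S0 n : alpha N Q (S n) 0 = alpha N Q n 0 + alpha_incr n.
Proof.
  cbn -[INR rsum mtrace mpow]. unfold alpha_incr, alpha_pair, trQ.
  cbn -[INR rsum mtrace mpow]. ring.
Qed.

Lemma alpha_S1 n : alpha N Q (S n) 1 = rhoN * alpha N Q n 1 - alpha_incr n.
Proof.
  cbn -[INR rsum mtrace mpow]. unfold alpha_incr, alpha_pair, trQ, rhoN.
  cbn -[INR rsum mtrace mpow]. ring.
Qed.

Lemma alpha_SS n s :
  alpha N Q (S n) (S (S s)) = rhoN * alpha N Q n (S (S s)) + aaN * alpha N Q n (S s).
Proof. cbn -[INR rsum mtrace mpow]. unfold rhoN, aaN. ring. Qed.

Lemma alpha_vanish n s : (n < s)%nat -> alpha N Q n s = 0.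
Proof.
  revert s. induction n as [|n IH]; intros s Hs; [reflexivity|].
  destruct s as [|[|s]]; try lia. rewrite alpha_SS, !IH by lia. ring.
Qed.

Lemma alpha0_rsum n : alpha N Q n 0 = rsum n alpha_incr.
Proof. induction n as [|n IH]; [reflexivity|]. now rewrite alpha_S0, IH. Qed.

Lemma alpha_pair_S n w : alpha_pair (S n) w
  = rhoN * alpha_pair n w + aaN * alpha_pair n (fun s => w (S s)) - alpha_incr n * w 1%nat.
Proof.
  unfold alpha_pair. rewrite rsum_shift, alpha_S1.
  rewrite (rsum_ext _ _ (fun k => rhoN * (alpha N Q n (S (S k)) * w (S (S k)))
                                  + aaN * (alpha N Q n (S k) * w (S (S k)))))
    by (intros; rewrite alpha_SS; ring).
  rewrite rsum_plus, !rsum_scal_l.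
  assert (E : rsum n (fun k => alpha N Q n (S k) * w (S k)) = alpha N Q n 1%nat * w 1%nat
              + rsum n (fun k => alpha N Q n (S (S k)) * w (S (S k)))).
  { rewrite <- (rsum_shift n (fun k => alpha N Q n (S k) * w (S k))). cbn [rsum].
    rewrite (alpha_vanish n (S n)) by lia. ring. }
  rewrite E. ring.
Qed.

Lemma alpha_pair_shift_poly n w : alpha_pair n w
  = - rsum n (fun k => alpha_incr k * shift_poly rhoN aaN (n - 1 - k) (fun s => w (S s))).
Proof.
  revert w. induction n as [|n IH]; intros w; [unfold alpha_pair; simpl; ring|].
  rewrite alpha_pair_S, !IH. cbn [rsum].
  replace (S n - 1 - n)%nat with O by lia.
  rewrite (rsum_ext _ (fun k => alpha_incr k * shift_poly rhoN aaN (S n - 1 - k) _)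
     (fun k => rhoN * (alpha_incr k * shift_poly rhoN aaN (n - 1 - k) (fun s => w (S s)))
        + aaN * (alpha_incr k * shift_poly rhoN aaN (n - 1 - k) (fun s => w (S (S s)))))).
  - rewrite rsum_plus, !rsum_scal_l. simpl shift_poly. ring.
  - intros k Hk. replace (S n - 1 - k)%nat with (S (n - 1 - k)) by lia. simpl. ring.
Qed.

Definition alpha_abs_sum (n : nat) : R := rsum n (fun k => Rabs (alpha N Q n (S k))).

Lemma alpha_abs_sum_split n : alpha_abs_sum n
  = Rabs (alpha N Q n 1) + rsum n (fun k => Rabs (alpha N Q n (S (S k)))).
Proof.
  unfold alpha_abs_sum. rewrite <- (rsum_shift n (fun k => Rabs (alpha N Q n (S k)))).
  cbn [rsum]. rewrite (alpha_vanish n (S n)), Rabs_R0 by lia. ring.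
Qed.

Lemma alpha_tail_le n q : -1 <= q <= 1 -> Rabs (alpha_tail N Q n q) <= alpha_abs_sum n.
Proof.
  intros Hq. unfold alpha_tail. destruct n as [|m].
  - unfold alpha_abs_sum. simpl. rewrite Rabs_R0. lra.
  - replace (S m - 1)%nat with m by lia. rewrite alpha_abs_sum_split.
    eapply Rle_trans; [apply rsum_Rabs|].
    assert (rsum m (fun k => Rabs (q ^ (k + 2) * alpha N Q (S m) (k + 2)))
            <= rsum m (fun k => Rabs (alpha N Q (S m) (S (S k))))).
    { apply rsum_le. intros k _. replace (k + 2)%nat with (S (S k)) by lia.
      rewrite Rabs_mult, <- RPow_abs.
      assert (Rabs q ^ S (S k) <= 1)
        by (apply pow_le_one; split; [apply Rabs_pos | apply Rabs_le; lra]).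
      pose proof (pow_le (Rabs q) (S (S k)) (Rabs_pos q)).
      pose proof (Rabs_pos (alpha N Q (S m) (S (S k)))). nra. }
    cbn [rsum]. pose proof (Rabs_pos (alpha N Q (S m) 1)).
    pose proof (Rabs_pos (alpha N Q (S m) (S (S m)))). lra.
Qed.

Lemma alpha1_abs_le n : Rabs (alpha N Q n 1) <= alpha_abs_sum n.
Proof.
  rewrite alpha_abs_sum_split.
  enough (0 <= rsum n (fun k => Rabs (alpha N Q n (S (S k))))) by lra.
  apply rsum_nonneg. intros. apply Rabs_pos.
Qed.

Hypotheses (HN : (8 < N)%nat) (Hst : stochastic N Q) (Hsym : symmetric N Q).

Lemma INR_N_gt_8 : 8 < INR N.
Proof. apply (lt_INR 8 N) in HN. simpl in HN. lra. Qed.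

Lemma rhoN_aaN : 0 <= aaN <= rhoN /\ rhoN + aaN = 1.
Proof.
  pose proof INR_N_gt_8. unfold rhoN, aaN. split; [split|field; lra].
  - apply Rlt_le, Rdiv_lt_0_compat; lra.
  - apply Rmult_le_compat_r; [apply Rlt_le, Rinv_0_lt_compat|]; lra.
Qed.

Definition walk_trace (m : nat) : R := lazy_trace N Q rhoN aaN m / INR N.

Lemma alpha_pair_renewal n : 1 + alpha_pair n trQ = 1 - rsum n (fun k =>
  (1 + alpha_pair k trQ) * (walk_trace (n - k) - rhoN * walk_trace (n - 1 - k))).
Proof.
  pose proof INR_N_gt_8. rewrite alpha_pair_shift_poly at 1.
  rewrite (rsum_ext _
    (fun k => (1 + alpha_pair k trQ) * (walk_trace (n - k) - rhoN * walk_trace (n - 1 - k)))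
    (fun k => alpha_incr k * shift_poly rhoN aaN (n - 1 - k) (fun s => trQ (S s))));
    [ring|]. intros k Hk.
  unfold walk_trace, alpha_incr. rewrite <- !shift_poly_mtrace.
  replace (n - k)%nat with (S (n - 1 - k)) by lia. cbn [shift_poly].
  change (fun s => mtrace N (mpow N Q s)) with trQ.
  change (fun s => trQ (S s)) with (fun s => mtrace N (mpow N Q (S s))).
  unfold aaN. field. lra.
Qed.

Lemma trQ_nonneg s : 0 <= trQ s.
Proof. apply rsum_nonneg. intros. apply mpow_nonneg; auto. apply Hst. Qed.

Lemma walk_trace_0 : walk_trace O = 1.
Proof.
  pose proof INR_N_gt_8. unfold walk_trace, lazy_trace. rewrite mtrace_kron. field. lra.
Qed.

Lemma walk_trace_pos m : 0 < walk_trace m.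
Proof.
  pose proof INR_N_gt_8. destruct rhoN_aaN as [Ha Hs].
  apply Rdiv_lt_0_compat; [apply lazy_trace_pos|]; auto; lia || lra.
Qed.

Lemma walk_trace_log_convex m :
  walk_trace (S m) * walk_trace (S m) <= walk_trace m * walk_trace (S (S m)).
Proof.
  pose proof INR_N_gt_8. destruct rhoN_aaN as [Ha Hs].
  pose proof (lazy_trace_log_convex N Q rhoN aaN Hst Hsym m Ha) as Hlc.
  apply (Rmult_le_compat_r (/ INR N * / INR N)) in Hlc;
    [|apply Rmult_le_pos; apply Rlt_le, Rinv_0_lt_compat; lra].
  unfold walk_trace, Rdiv. lra.
Qed.

Lemma walk_trace_nonincreasing m : walk_trace (S m) <= walk_trace m.
Proof.
  pose proof INR_N_gt_8. destruct rhoN_aaN as [Ha Hs].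
  apply Rmult_le_compat_r; [apply Rlt_le, Rinv_0_lt_compat; lra|].
  apply lazy_trace_nonincreasing; auto; lia.
Qed.

Lemma alpha_pair_renewal_nonneg n : 0 <= 1 + alpha_pair n trQ.
Proof.
  destruct rhoN_aaN as [Ha Hs].
  exact (renewal_solution_nonneg walk_trace walk_trace_0 walk_trace_pos
           walk_trace_log_convex walk_trace_nonincreasing rhoN
           (fun n => 1 + alpha_pair n trQ) ltac:(lra) alpha_pair_renewal n).
Qed.

Lemma alpha_pair_renewal_le_1 n : 1 + alpha_pair n trQ <= 1.
Proof.
  pose proof INR_N_gt_8. destruct rhoN_aaN as [Ha Hs].
  rewrite alpha_pair_shift_poly.
  enough (0 <= rsum n (fun k =>
                 alpha_incr k * shift_poly rhoN aaN (n - 1 - k) (fun s => trQ (S s)))) by lra.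
  apply rsum_nonneg. intros k _. apply Rmult_le_pos.
  - unfold alpha_incr. pose proof (alpha_pair_renewal_nonneg k).
    apply Rmult_le_pos; [apply Rlt_le, Rdiv_lt_0_compat, pow_lt|]; lra.
  - apply shift_poly_nonneg; [lra | lra | intros; apply trQ_nonneg].
Qed.

Lemma alpha_incr_bounds n : 0 <= alpha_incr n <= 2 / INR N ^ 2.
Proof.
  pose proof INR_N_gt_8. pose proof (alpha_pair_renewal_nonneg n).
  pose proof (alpha_pair_renewal_le_1 n).
  assert (0 < 2 / INR N ^ 2) by (apply Rdiv_lt_0_compat, pow_lt; lra).
  unfold alpha_incr. nra.
Qed.

Lemma alpha0_bound n : 0 <= alpha N Q n 0 <= INR n * (2 / INR N ^ 2).
Proof.
  rewrite alpha0_rsum, <- rsum_const. split.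
  - apply rsum_nonneg. intros. apply alpha_incr_bounds.
  - apply rsum_le. intros. apply alpha_incr_bounds.
Qed.

Lemma alpha_abs_sum_le n : alpha_abs_sum n <= rsum n alpha_incr.
Proof.
  destruct rhoN_aaN as [Ha Hs].
  induction n as [|n IH]; [unfold alpha_abs_sum; simpl; lra|].
  pose proof (alpha_incr_bounds n).
  unfold alpha_abs_sum at 1. rewrite rsum_shift. cbn [rsum].
  rewrite alpha_S1.
  assert (E1 : Rabs (rhoN * alpha N Q n 1 - alpha_incr n)
               <= rhoN * Rabs (alpha N Q n 1) + alpha_incr n).
  { eapply Rle_trans; [apply Rabs_triang|].
    rewrite Rabs_Ropp, Rabs_mult, (Rabs_pos_eq rhoN), (Rabs_pos_eq (alpha_incr n)) by lra. lra. }
  assert (E2 : rsum n (fun k => Rabs (alpha N Q (S n) (S (S k))))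
               <= rhoN * rsum n (fun k => Rabs (alpha N Q n (S (S k)))) + aaN * alpha_abs_sum n).
  { unfold alpha_abs_sum. rewrite <- !rsum_scal_l, <- rsum_plus. apply rsum_le. intros k _.
    rewrite alpha_SS. eapply Rle_trans; [apply Rabs_triang|].
    rewrite !Rabs_mult, (Rabs_pos_eq rhoN), (Rabs_pos_eq aaN) by lra. lra. }
  pose proof (alpha_abs_sum_split n). nra.
Qed.

Lemma alpha_abs_sum_bound n : alpha_abs_sum n <= INR n * (2 / INR N ^ 2).
Proof.
  eapply Rle_trans; [apply alpha_abs_sum_le|]. rewrite <- rsum_const.
  apply rsum_le. intros. apply alpha_incr_bounds.
Qed.

End Alpha.

Lemma linear_le_geometric NR eps K n k : 1 <= NR -> 0 < eps <= 1 -> eps < NR ->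
  4 <= K -> 2 <= K * eps -> (n <= k + 2)%nat ->
  INR n * (2 / NR ^ 2) <= K * / NR * (NR / (NR - eps)) ^ k.
Proof.
  intros HNR He HeN HK HKe Hnk.
  assert (Hx : 1 + eps / NR <= NR / (NR - eps)).
  { apply Rle_trans with (1 + eps / (NR - eps)); [|right; field; lra].
    apply Rplus_le_compat_l, Rmult_le_compat_l; [lra|]. apply Rinv_le_contravar; lra. }
  assert (Hg : 1 + INR k * (eps / NR) <= (NR / (NR - eps)) ^ k).
  { assert (0 < eps / NR) by (apply Rdiv_lt_0_compat; lra).
    eapply Rle_trans; [apply poly; assumption|]. apply pow_incr. lra. }
  assert (Hn : INR n <= INR k + 2)
    by (apply le_INR in Hnk; rewrite plus_INR in Hnk; simpl in Hnk; lra).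
  pose proof (pos_INR k).
  assert (HiN : 0 < / NR) by (apply Rinv_0_lt_compat; lra).
  apply Rle_trans with (K * / NR * (1 + INR k * (eps / NR))).
  2:{ apply Rmult_le_compat_l; [apply Rmult_le_pos|]; lra. }
  replace (INR n * (2 / NR ^ 2)) with (INR n * 2 * (/ NR * / NR)) by (field; lra).
  replace (K * / NR * (1 + INR k * (eps / NR)))
    with ((K * NR + INR k * (K * eps)) * (/ NR * / NR)) by (field; lra).
  apply Rmult_le_compat_r; [nra|]. nra.
Qed.

Lemma prefactor_bounds A eps : 5 <= A -> 0 < eps <= 1 ->
  4 <= / PI * A * ((4 + eps) / eps) /\ 2 <= / PI * A * ((4 + eps) / eps) * eps.
Proof.
  intros HA He.
  assert (Hpi : / 4 <= / PI) by (apply Rinv_le_contravar; [apply PI_RGT_0 | apply PI_4]).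
  assert (HY : (4 + eps) / eps * eps = 4 + eps) by (field; lra).
  assert (HY5 : 5 <= (4 + eps) / eps).
  { apply Rmult_le_reg_r with eps; [lra|]. rewrite HY. lra. }
  assert (5 / 4 <= / PI * A) by nra.
  split; [nra|]. rewrite Rmult_assoc, HY. nra.
Qed.

Lemma sqrt2_div_sqrt_1_minus_cos1_ge_1 : 1 <= sqrt 2 / sqrt (1 - cos 1).
Proof.
  assert (Hc : 0 < 1 - cos 1).
  { replace 1 with (2 * (1 / 2)) at 2 by field. rewrite cos_2a_sin.
    assert (0 < sin (1 / 2)) by (apply sin_gt_0; pose proof PI2_1; lra). nra. }
  assert (0 < sqrt (1 - cos 1)) by (apply sqrt_lt_R0; assumption).
  assert (sqrt (1 - cos 1) <= sqrt 2) by (apply sqrt_le_1_alt; pose proof (COS_bound 1); lra).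
  apply Rmult_le_reg_r with (sqrt (1 - cos 1)); [assumption|].
  unfold Rdiv. rewrite Rmult_assoc, Rinv_l by lra. lra.
Qed.

Theorem lemma4p5 (N : nat) (Q : nat -> nat -> R)
  (HN : (8 < N)%nat)
  (Hstoch : stochastic N Q)
  (Hsym : symmetric N Q)
  (Hirr : irreducible N Q)
  (Htr : mtrace N Q = 0)
  (eps : R) (n : nat)
  (Heps : 0 < eps <= 1) :
  Rabs (alpha N Q n 0) <=
    (/ eps + 4 * sqrt 2) / PI * ((4 + eps) / eps) * / INR N
      * (INR N / (INR N - eps)) ^ (n - 1)
  /\
  Rabs (alpha N Q n 1) <=
    9 / PI * ((4 + eps) / eps) * / INR N
      * (INR N / (INR N - eps)) ^ (n - 1)
  /\
  (forall q : R, -1 <= q <= 1 ->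
    Rabs (alpha_tail N Q n q) <=
      / PI * (/ eps + 16 * sqrt 2 / sqrt (1 - cos 1)) * ((4 + eps) / eps)
        * / INR N * (INR N / (INR N - eps)) ^ (n - 2)).
Proof.
  pose proof (INR_N_gt_8 N HN) as HNR.
  assert (Hgeom : forall A k, 5 <= A -> (n <= k + 2)%nat -> INR n * (2 / INR N ^ 2)
            <= / PI * A * ((4 + eps) / eps) * / INR N * (INR N / (INR N - eps)) ^ k).
  { intros A k HA Hk. destruct (prefactor_bounds A eps HA Heps).
    apply linear_le_geometric; lra || lia. }
  assert (Hie : 1 <= / eps) by (rewrite <- Rinv_1; apply Rinv_le_contravar; lra).
  assert (Hs2 : 1 <= sqrt 2) by (rewrite <- sqrt_1; apply sqrt_le_1_alt; lra).
  pose proof (alpha_abs_sum_bound N Q HN Hstoch Hsym n) as Habs.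
  split; [|split].
  - destruct (alpha0_bound N Q HN Hstoch Hsym n).
    rewrite Rabs_pos_eq by assumption. eapply Rle_trans; [eassumption|].
    replace ((/ eps + 4 * sqrt 2) / PI) with (/ PI * (/ eps + 4 * sqrt 2)) by (unfold Rdiv; ring).
    apply Hgeom; [lra | lia].
  - eapply Rle_trans; [apply alpha1_abs_le|]. eapply Rle_trans; [exact Habs|].
    replace (9 / PI) with (/ PI * 9) by (unfold Rdiv; ring).
    apply Hgeom; [lra | lia].
  - intros q Hq. eapply Rle_trans; [apply alpha_tail_le, Hq|].
    eapply Rle_trans; [exact Habs|].
    pose proof sqrt2_div_sqrt_1_minus_cos1_ge_1.
    apply Hgeom; [|lia]. unfold Rdiv in *. lra.
Qed.
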